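(* Let $K\le P$ be positive integers, $\theta=(K,P)$, and suppose $p(\theta)>0$. Then for every $n\ge3$, $$\frac{\mathbb{E}[T_n(\theta)]}{\mathbb{E}[T_n(p(\theta))]}=\frac{C_{\rm K}(\theta)}{p(\theta)}=1+\frac{q(\theta)^2-r(\theta)}{(1-q(\theta))^3}\,q(\theta)\ \ge 1,$$ with equality if and only if $P<2K$; moreover, if $2K\le P<3K$ this ratio equals $1+\big(q(\theta)/(1-q(\theta))\big)^3$.
   Context: Random key graph: each of $n$ nodes receives independently a uniformly random $K$-element subset of $\{1,\dots,P\}$, distinct nodes being adjacent iff their subsets intersect; $T_n(\theta)$ is its number of triangles. $q(\theta)=\binom{P-K}{K}/\binom{P}{K}$ if $2K\le P$ and $0$ otherwise; $p(\theta)=1-q(\theta)$ (the edge probability); $r(\theta)=\binom{P-2K}{K}/\binom{P}{K}$ if $3K\le P$ and $0$ otherwise; $\beta(\theta)=(1-q)^3+q^3-qr$; $C_{\rm K}(\theta)=\beta(\theta)/(1-q(\theta))^2$. $T_n(p)$ is the number of triangles of the Erdős–Rényi graph $\mathbb{G}(n;p)$ (edges independent with probability $p$), whose clustering coefficient is $C_{\rm ER}(p)=p$. *)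

From HB Require Import structures.
From mathcomp Require Import all_boot all_order all_algebra.
Set Implicit Arguments. Unset Strict Implicit. Unset Printing Implicit Defensive.
Import Order.TTheory GRing.Theory Num.Theory.
Local Open Scope ring_scope.

Definition triangles (n : nat) (adj : rel 'I_n) : nat :=
  #|[set t : 'I_n * 'I_n * 'I_n |
       [&& (t.1.1 < t.1.2)%N, (t.1.2 < t.2)%N,
           adj t.1.1 t.1.2, adj t.1.2 t.2 & adj t.1.1 t.2]]|.

Definition key_assignments (n K P : nat) : {set {ffun 'I_n -> {set 'I_P}}} :=
  [set f : {ffun 'I_n -> {set 'I_P}} | [forall i : 'I_n, #|f i| == K]].

Definition rkg_adj (n P : nat) (f : {ffun 'I_n -> {set 'I_P}}) : rel 'I_n :=
  fun i j => (i != j) && ~~ [disjoint f i & f j].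

(* E[T_n(theta)], the assignment being uniform over key_assignments *)
Definition ET_rkg (n K P : nat) : rat :=
  (\sum_(f in key_assignments n K P) (triangles (rkg_adj f))%:R)
    / (#|key_assignments n K P|)%:R.

(* potential edges {i,j} represented as pairs (i,j) with i < j *)
Definition pairs (n : nat) : {set 'I_n * 'I_n} := [set e : 'I_n * 'I_n | (e.1 < e.2)%N].

Definition er_adj (n : nat) (g : {set 'I_n * 'I_n}) : rel 'I_n :=
  fun i j => ((i, j) \in g) || ((j, i) \in g).

Definition er_weight (n : nat) (p : rat) (g : {set 'I_n * 'I_n}) : rat :=
  \prod_(e in pairs n) (if e \in g then p else 1 - p).

Definition ET_er (n : nat) (p : rat) : rat :=
  \sum_(g : {set 'I_n * 'I_n} | g \subset pairs n)
     er_weight p g * (triangles (er_adj g))%:R.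

Definition q_th (K P : nat) : rat :=
  if (2 * K <= P)%N then ('C(P - K, K))%:R / ('C(P, K))%:R else 0.
Definition p_th (K P : nat) : rat := 1 - q_th K P.
Definition r_th (K P : nat) : rat :=
  if (3 * K <= P)%N then ('C(P - 2 * K, K))%:R / ('C(P, K))%:R else 0.
Definition beta_th (K P : nat) : rat :=
  (1 - q_th K P) ^+ 3 + q_th K P ^+ 3 - q_th K P * r_th K P.
Definition CK (K P : nat) : rat := beta_th K P / (1 - q_th K P) ^+ 2.

From HB Require Import structures.
From mathcomp Require Import all_boot all_order all_algebra.
From mathcomp Require Import ring zify.
Set Implicit Arguments. Unset Strict Implicit. Unset Printing Implicit Defensive.
Import Order.TTheory GRing.Theory Num.Theory.
Local Open Scope ring_scope.

(* Both expectations are the number of triples i < j < k times the probability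
   that a fixed triple is a triangle, the latter computed through the
   independence of the coordinates of a product distribution.  In G(n;p) it is
   p^3.  In the key graph, inclusion-exclusion over the three disjointness
   events gives 1 - 3q + 3q^2 - qr: two key sets disjoint from a common third
   one are independent given it (probability q^2), and a key set misses two
   disjoint ones with probability r.  Hence the ratio is
   (1 - 3q + 3q^2 - qr) / (1 - q)^3 = 1 + q (q^2 - r) / (1 - q)^3, and for
   2K <= P the inequality r < q^2 is C(m-K,K) C(m+K,K) < C(m,K)^2 with m = P - K,
   which compares falling factorials factor by factor: (z-K)(z+K) < z^2. *)

Lemma natr_andb (R : pzSemiRingType) (a b : bool) : (a && b)%:R = a%:R * b%:R :> R.
Proof. by case: a; case: b; rewrite ?mul1r ?mul0r. Qed.

Lemma natr_negb (R : pzRingType) (b : bool) : (~~ b)%:R = 1 - b%:R :> R.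
Proof. by case: b; rewrite ?subrr ?subr0. Qed.

Lemma sum_natr_eq (R : pzSemiRingType) (J : finType) (F : J -> R) (a : J) :
  \sum_x F x * (x == a)%:R = F a.
Proof.
rewrite (bigD1 a) //= eqxx mulr1 big1 ?addr0 // => x /negbTE ->.
by rewrite mulr0.
Qed.

Lemma prod_if_eq (R : pzSemiRingType) (I : finType) (i : I) (F : I -> R) :
  \prod_l (if l == i then F l else 1) = F i.
Proof. by rewrite -big_mkcond big_pred1_eq. Qed.

Section ProductWeights.
Variables (R : comPzRingType) (I J : finType) (w : I -> J -> R).
Hypothesis sum_w1 : forall l, \sum_x w l x = 1.
Variables (i j k : I).
Hypotheses (nij : i != j) (njk : j != k) (nik : i != k).

Lemma sum_ffun_prod_indep3 (hi hj hk : J -> R) :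
  \sum_(f : {ffun I -> J}) (\prod_l w l (f l)) * (hi (f i) * hj (f j) * hk (f k)) =
  (\sum_x w i x * hi x) * (\sum_x w j x * hj x) * (\sum_x w k x * hk x).
Proof.
pose h l x := (if l == i then hi x else 1) * (if l == j then hj x else 1)
  * (if l == k then hk x else 1).
have hE (f : {ffun I -> J}) : hi (f i) * hj (f j) * hk (f k) = \prod_l h l (f l).
  by rewrite !big_split /= !prod_if_eq.
have sum_wh l : \sum_x w l x * h l x =
    (if l == i then \sum_x w i x * hi x else 1) *
    (if l == j then \sum_x w j x * hj x else 1) *
    (if l == k then \sum_x w k x * hk x else 1).
  rewrite /h; have [->|li] := eqVneq l i.
    by rewrite (negbTE nij) (negbTE nik) !mulr1; under eq_bigr do rewrite !mulr1.
  have [->|lj] := eqVneq l j.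
    by rewrite (negbTE njk) !mulr1 mul1r; under eq_bigr do rewrite !mulr1 mul1r.
  have [->|lk] := eqVneq l k.
    by rewrite !mul1r; under eq_bigr do rewrite !mul1r.
  by rewrite !mulr1; under eq_bigr do rewrite !mulr1.
under eq_bigr do rewrite hE -big_split /=.
rewrite -(bigA_distr_bigA (fun l x => w l x * h l x)) /=.
by under eq_bigr do rewrite sum_wh; rewrite !big_split /= !prod_if_eq.
Qed.

Lemma sum_ffun_prod_marginal3 (H : J -> J -> J -> R) :
  \sum_(f : {ffun I -> J}) (\prod_l w l (f l)) * H (f i) (f j) (f k) =
  \sum_a \sum_b \sum_c w i a * w j b * w k c * H a b c.
Proof.
transitivity (\sum_(f : {ffun I -> J}) \sum_a \sum_b \sum_c H a b c *
    ((\prod_l w l (f l)) * ((f i == a)%:R * (f j == b)%:R * (f k == c)%:R))).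
  apply: eq_bigr => f _.
  have -> : H (f i) (f j) (f k) = \sum_a (\sum_b (\sum_c
      H a b c * (c == f k)%:R) * (b == f j)%:R) * (a == f i)%:R.
    by rewrite !sum_natr_eq.
  rewrite mulr_sumr; apply: eq_bigr => a _; rewrite mulr_suml mulr_sumr.
  apply: eq_bigr => b _; rewrite !mulr_suml mulr_sumr; apply: eq_bigr => c _.
  by rewrite !(eq_sym (f _)); ring.
rewrite exchange_big; apply: eq_bigr => a _; rewrite exchange_big.
apply: eq_bigr => b _; rewrite exchange_big; apply: eq_bigr => c _.
rewrite -mulr_sumr (sum_ffun_prod_indep3
  (fun x => (x == a)%:R) (fun x => (x == b)%:R) (fun x => (x == c)%:R)).
by rewrite !sum_natr_eq mulrC.
Qed.
End ProductWeights.

Lemma sum_natr_mem (R : pzSemiRingType) (T : finType) (A : {pred T}) :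
  \sum_x (x \in A)%:R = #|A|%:R :> R.
Proof.
by rewrite -sum1_card natr_sum [RHS]big_mkcond; apply: eq_bigr => x _; case: (x \in A).
Qed.

Definition increasing3 n (t : 'I_n * 'I_n * 'I_n) : bool := (t.1.1 < t.1.2 < t.2)%N.

Lemma trianglesE (R : pzSemiRingType) n (adj : rel 'I_n) :
  (triangles adj)%:R = \sum_(t | increasing3 t)
    (adj t.1.1 t.1.2 && adj t.1.2 t.2 && adj t.1.1 t.2)%:R :> R.
Proof.
rewrite /triangles -sum_natr_mem [RHS]big_mkcond; apply: eq_bigr => -[[i j] k] _.
by rewrite inE /increasing3 /=; case: (i < j)%N; case: (j < k)%N; rewrite /= ?andbA.
Qed.

Lemma expected_triangles (R : comPzSemiRingType) (X : finType) (A : pred X)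
    (w : X -> R) n (adj : X -> rel 'I_n) (c : R) :
  (forall i j k : 'I_n, (i < j < k)%N ->
     \sum_(x | A x) w x * (adj x i j && adj x j k && adj x i k)%:R = c) ->
  \sum_(x | A x) w x * (triangles (adj x))%:R = #|@increasing3 n|%:R * c.
Proof.
move=> triangle_c; under eq_bigr do rewrite trianglesE mulr_sumr.
rewrite exchange_big /= (eq_bigr (fun=> c)) ?sumr_const ?mulr_natl //.
by move=> [[i j] k]; apply: triangle_c.
Qed.

Lemma ltn_ord_neq n (a b : 'I_n) : (a < b)%N -> a != b.
Proof. by move=> lt_ab; apply/eqP => eq_ab; rewrite eq_ab ltnn in lt_ab. Qed.

Lemma increasing3_gt0 n : (3 <= n)%N -> (0 < #|@increasing3 n|)%N.
Proof.
move=> n_ge3; apply/card_gt0P.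
have lt0n : (0 < n)%N by lia.
have lt1n : (1 < n)%N by lia.
by exists (Ordinal lt0n, Ordinal lt1n, Ordinal n_ge3).
Qed.

Section ErdosRenyi.
Variables (n : nat) (p : rat).

(* A non-edge pair is a coin that always lands on [false]; this lets subsets of
   [pairs n] be summed over as arbitrary boolean functions on all pairs. *)
Definition er_coin (e : 'I_n * 'I_n) (b : bool) : rat :=
  if e \in pairs n then (if b then p else 1 - p) else (~~ b)%:R.

Lemma sum_er_coin e : \sum_b er_coin e b = 1.
Proof. by rewrite big_bool /er_coin; case: (e \in pairs n) => /=; rewrite ?subrKC ?add0r. Qed.

Lemma prod_er_coin (g : {set 'I_n * 'I_n}) :
  \prod_e er_coin e (e \in g) = (g \subset pairs n)%:R * er_weight p g.
Proof.
rewrite (bigID (mem (pairs n))) /= mulrC; congr (_ * _); last first.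
  by apply: eq_bigr => e e_pair; rewrite /er_coin e_pair.
have [g_pairs | /subsetPn [e e_g e_npair]] := boolP (g \subset pairs n).
  apply: big1 => e e_npair; rewrite /er_coin (negbTE e_npair).
  by case: (boolP (e \in g)) => // /(subsetP g_pairs); rewrite (negbTE e_npair).
by rewrite (bigD1 e) //= /er_coin (negbTE e_npair) e_g mul0r.
Qed.

Lemma sum_er_weight (F : {set 'I_n * 'I_n} -> rat) :
  \sum_(g : {set 'I_n * 'I_n} | g \subset pairs n) er_weight p g * F g =
  \sum_(f : {ffun 'I_n * 'I_n -> bool}) (\prod_e er_coin e (f e)) * F [set e | f e].
Proof.
have set_ffun_bij : bijective (fun g : {set 'I_n * 'I_n} => [ffun e => e \in g]).
  exists (fun f : {ffun 'I_n * 'I_n -> bool} => [set e | f e]).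
    by move=> g; apply/setP => e; rewrite inE ffunE.
  by move=> f; apply/ffunP => e; rewrite ffunE inE.
rewrite (reindex _ (onW_bij _ set_ffun_bij)) big_mkcond /=; apply: eq_bigr => g _.
under eq_bigr do rewrite ffunE.
have -> : [set e | [ffun e => e \in g] e] = g.
  by apply/setP => e; rewrite inE ffunE.
by rewrite prod_er_coin; case: (g \subset pairs n); rewrite ?mul1r ?mul0r.
Qed.

Lemma er_three_edges (e1 e2 e3 : 'I_n * 'I_n) :
  e1 != e2 -> e2 != e3 -> e1 != e3 ->
  e1 \in pairs n -> e2 \in pairs n -> e3 \in pairs n ->
  \sum_(g : {set 'I_n * 'I_n} | g \subset pairs n) er_weight p g *
    ((e1 \in g) && (e2 \in g) && (e3 \in g))%:R = p ^+ 3.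
Proof.
move=> n12 n23 n13 e1_pair e2_pair e3_pair; rewrite sum_er_weight.
under eq_bigr do rewrite !inE !natr_andb.
have coin_mean e : e \in pairs n -> \sum_b er_coin e b * b%:R = p.
  by move=> e_pair; rewrite big_bool /er_coin e_pair /= mulr1 mulr0 addr0.
rewrite (sum_ffun_prod_indep3 sum_er_coin n12 n23 n13
  (fun b => b%:R) (fun b => b%:R) (fun b => b%:R)).
by rewrite /= !coin_mean // !exprS expr0 mulr1 mulrA.
Qed.

Lemma er_adj_lt (g : {set 'I_n * 'I_n}) (i j : 'I_n) :
  g \subset pairs n -> (i < j)%N -> er_adj g i j = ((i, j) \in g).
Proof.
move=> g_pairs lt_ij; rewrite /er_adj; case: (boolP ((j, i) \in g)) => [/(subsetP g_pairs)|_].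
  by rewrite inE /=; lia.
by rewrite orbF.
Qed.

Lemma ET_erE : ET_er n p = #|@increasing3 n|%:R * p ^+ 3.
Proof.
apply: expected_triangles => i j k /andP [lt_ij lt_jk].
have lt_ik : (i < k)%N by lia.
rewrite (eq_bigr (fun g => er_weight p g *
    (((i, j) \in g) && ((j, k) \in g) && ((i, k) \in g))%:R)); last first.
  by move=> g g_pairs; rewrite !er_adj_lt.
have [neq_ij neq_jk] := (negbTE (ltn_ord_neq lt_ij), negbTE (ltn_ord_neq lt_jk)).
by apply: er_three_edges; rewrite ?inE ?xpair_eqE //= ?(eq_sym j i) ?neq_ij ?neq_jk ?andbF.
Qed.
End ErdosRenyi.

(* The case splits in [q_th] and [r_th] are redundant: the binomial coefficient
   vanishes in the excluded cases. *)
Lemma q_thE K P : q_th K P = 'C(P - K, K)%:R / 'C(P, K)%:R.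
Proof. by rewrite /q_th; case: leqP => // ltP2K; rewrite bin_small ?mul0r //; lia. Qed.

Lemma r_thE K P : r_th K P = 'C(P - 2 * K, K)%:R / 'C(P, K)%:R.
Proof. by rewrite /r_th; case: leqP => // ltP3K; rewrite bin_small ?mul0r //; lia. Qed.

Lemma q_th_small K P : (P < 2 * K)%N -> q_th K P = 0.
Proof. by move=> ltP2K; rewrite /q_th leqNgt ltP2K. Qed.

Lemma r_th_small K P : (P < 3 * K)%N -> r_th K P = 0.
Proof. by move=> ltP3K; rewrite /r_th leqNgt ltP3K. Qed.

Section RandomKeyGraph.
Variables K P : nat.
Hypothesis leKP : (K <= P)%N.

Definition unif_key (X : {set 'I_P}) : rat := (#|X| == K)%:R / 'C(P, K)%:R.

Lemma bin_neq0 : 'C(P, K)%:R != 0 :> rat.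
Proof. by rewrite pnatr_eq0 -lt0n bin_gt0. Qed.

Lemma sum_unif_key_subset (B : {set 'I_P}) :
  \sum_(X : {set 'I_P}) unif_key X * (X \subset B)%:R = 'C(#|B|, K)%:R / 'C(P, K)%:R.
Proof.
rewrite -cards_draws -sum_natr_mem mulr_suml; apply: eq_bigr => X _.
by rewrite /unif_key mulrAC -natr_andb inE andbC.
Qed.

Lemma sum_unif_key : \sum_(X : {set 'I_P}) unif_key X = 1.
Proof.
transitivity (\sum_(X : {set 'I_P}) unif_key X * (X \subset setT)%:R).
  by apply: eq_bigr => X _; rewrite subsetT mulr1.
by rewrite sum_unif_key_subset cardsT card_ord divff // bin_neq0.
Qed.

Lemma eq_sum_unif_key (F G : {set 'I_P} -> rat) :
  (forall X : {set 'I_P}, #|X| = K -> F X = G X) ->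
  \sum_(X : {set 'I_P}) unif_key X * F X = \sum_(X : {set 'I_P}) unif_key X * G X.
Proof.
move=> eqFG; apply: eq_bigr => X _.
by rewrite /unif_key; case: eqP => [/eqFG ->|]; rewrite ?mul0r.
Qed.

Lemma sum_unif_key_disjoint (A : {set 'I_P}) : #|A| = K ->
  \sum_(X : {set 'I_P}) unif_key X * [disjoint A & X]%:R = q_th K P.
Proof.
move=> cardA; under eq_bigr do rewrite disjoint_sym disjoints_subset.
have cardCA : #|~: A| = (P - K)%N by have := cardsC A; rewrite card_ord cardA; lia.
by rewrite sum_unif_key_subset q_thE cardCA.
Qed.

Lemma sum_unif_key_disjoint2 (A B : {set 'I_P}) :
  #|A| = K -> #|B| = K -> [disjoint A & B] ->
  \sum_(X : {set 'I_P}) unif_key X * ([disjoint A & X] && [disjoint B & X])%:R = r_th K P.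
Proof.
move=> cardA cardB disjAB.
under eq_bigr => X _ do rewrite !(disjoint_sym _ X) !disjoints_subset -subsetI -setCU.
have cardCAB : #|~: (A :|: B)| = (P - 2 * K)%N.
  have := cardsC (A :|: B); rewrite cardsU (disjoint_setI0 disjAB) cards0 card_ord.
  by rewrite cardA cardB; lia.
by rewrite sum_unif_key_subset r_thE cardCAB.
Qed.

Section Triangle.
Local Notation q := (q_th K P).
Local Notation r := (r_th K P).
Local Notation d A B := ([disjoint A & B]%:R : rat).

Lemma sum_unif_key_triangle_fixAB (A B : {set 'I_P}) : #|A| = K -> #|B| = K ->
  \sum_(C : {set 'I_P}) unif_key C *
    (~~ [disjoint A & B] && ~~ [disjoint B & C] && ~~ [disjoint A & C])%:R =
  (1 - d A B) * (1 - 2 * q +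
    \sum_(C : {set 'I_P}) unif_key C * ([disjoint A & C] && [disjoint B & C])%:R).
Proof.
move=> cardA cardB.
transitivity ((1 - d A B) * \sum_(C : {set 'I_P}) (unif_key C - unif_key C * d A C
    - unif_key C * d B C + unif_key C * ([disjoint A & C] && [disjoint B & C])%:R)).
  by rewrite mulr_sumr; apply: eq_bigr => C _; rewrite !natr_andb !natr_negb; ring.
rewrite big_split /= !sumrB sum_unif_key (sum_unif_key_disjoint cardA).
by rewrite (sum_unif_key_disjoint cardB); ring.
Qed.

Lemma sum_unif_key_triangle_fixA (A : {set 'I_P}) : #|A| = K ->
  \sum_(B : {set 'I_P}) unif_key B * \sum_(C : {set 'I_P}) unif_key C *
    (~~ [disjoint A & B] && ~~ [disjoint B & C] && ~~ [disjoint A & C])%:R =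
  (1 - q) * (1 - 2 * q) - q * r + \sum_(B : {set 'I_P}) unif_key B *
    \sum_(C : {set 'I_P}) unif_key C * ([disjoint A & C] && [disjoint B & C])%:R.
Proof.
move=> cardA.
set e := fun B : {set 'I_P} =>
  \sum_(C : {set 'I_P}) unif_key C * ([disjoint A & C] && [disjoint B & C])%:R.
rewrite (eq_sum_unif_key (G := fun B => (1 - 2 * q) + e B - d A B * (1 - 2 * q + r))).
  transitivity ((\sum_(B : {set 'I_P}) unif_key B) * (1 - 2 * q)
      + \sum_(B : {set 'I_P}) unif_key B * e B
      - (\sum_(B : {set 'I_P}) unif_key B * d A B) * (1 - 2 * q + r)).
    rewrite !mulr_suml -big_split -sumrB; apply: eq_bigr => B _ /=; ring.
  by rewrite sum_unif_key (sum_unif_key_disjoint cardA); ring.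
move=> B cardB; rewrite sum_unif_key_triangle_fixAB // -/(e B).
have [disjAB|_] := boolP [disjoint A & B]; last by rewrite /=; ring.
by rewrite /e sum_unif_key_disjoint2 //=; ring.
Qed.

Lemma sum_unif_key_disjoint_common :
  \sum_(A : {set 'I_P}) unif_key A * \sum_(B : {set 'I_P}) unif_key B *
    \sum_(C : {set 'I_P}) unif_key C * ([disjoint A & C] && [disjoint B & C])%:R = q ^+ 2.
Proof.
transitivity (\sum_(C : {set 'I_P}) unif_key C * q ^+ 2); last first.
  by rewrite -mulr_suml sum_unif_key mul1r.
transitivity (\sum_(C : {set 'I_P}) unif_key C *
   ((\sum_(A : {set 'I_P}) unif_key A * d C A) * (\sum_(B : {set 'I_P}) unif_key B * d C B))).
  rewrite [RHS](eq_bigr (fun C => \sum_(A : {set 'I_P}) \sum_(B : {set 'I_P})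
      unif_key A * (unif_key B * (unif_key C * ([disjoint A & C] && [disjoint B & C])%:R)))).
    rewrite exchange_big; apply: eq_bigr => A _; rewrite mulr_sumr exchange_big.
    by apply: eq_bigr => B _; rewrite !mulr_sumr.
  move=> C _; rewrite mulr_suml mulr_sumr; apply: eq_bigr => A _.
  rewrite mulr_sumr mulr_sumr; apply: eq_bigr => B _.
  by rewrite natr_andb !(disjoint_sym C); ring.
apply: eq_sum_unif_key => C cardC.
by rewrite !sum_unif_key_disjoint // expr2.
Qed.

Lemma sum_unif_key_triangle :
  \sum_(A : {set 'I_P}) \sum_(B : {set 'I_P}) \sum_(C : {set 'I_P})
    unif_key A * unif_key B * unif_key C *
    (~~ [disjoint A & B] && ~~ [disjoint B & C] && ~~ [disjoint A & C])%:R =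
  1 - 3 * q + 3 * q ^+ 2 - q * r.
Proof.
transitivity (\sum_(A : {set 'I_P}) unif_key A * \sum_(B : {set 'I_P}) unif_key B *
    \sum_(C : {set 'I_P}) unif_key C *
    (~~ [disjoint A & B] && ~~ [disjoint B & C] && ~~ [disjoint A & C])%:R).
  apply: eq_bigr => A _; rewrite mulr_sumr; apply: eq_bigr => B _.
  by rewrite !mulr_sumr; apply: eq_bigr => C _; rewrite !mulrA.
rewrite (eq_sum_unif_key sum_unif_key_triangle_fixA).
under eq_bigr do rewrite mulrDr.
by rewrite big_split /= -mulr_suml sum_unif_key mul1r sum_unif_key_disjoint_common; ring.
Qed.
End Triangle.

Lemma prod_unif_key n (f : {ffun 'I_n -> {set 'I_P}}) :
  \prod_l unif_key (f l) = (f \in key_assignments n K P)%:R / 'C(P, K)%:R ^+ n.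
Proof.
rewrite big_split /= prodr_const card_ord -exprVn inE; congr (_ * _).
have [all_K | /forallPn [l /negbTE not_K]] := boolP [forall l, #|f l| == K].
  by rewrite big1 // => l _; rewrite (forallP all_K).
by rewrite (bigD1 l) //= not_K mul0r.
Qed.

Lemma ET_rkg_prodE n : ET_rkg n K P =
  \sum_(f : {ffun 'I_n -> {set 'I_P}}) (\prod_l unif_key (f l)) * (triangles (rkg_adj f))%:R.
Proof.
have binn_neq0 : 'C(P, K)%:R ^+ n != 0 :> rat by rewrite expf_neq0 ?bin_neq0.
have card_assignments : #|key_assignments n K P|%:R = 'C(P, K)%:R ^+ n :> rat.
  have : \sum_(f : {ffun 'I_n -> {set 'I_P}}) \prod_l unif_key (f l) = 1.
    rewrite -(bigA_distr_bigA (fun _ X => unif_key X)) /=.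
    by rewrite big1 // => l _; apply: sum_unif_key.
  under eq_bigr do rewrite prod_unif_key.
  by rewrite -mulr_suml sum_natr_mem => /(canRL (divfK binn_neq0)); rewrite mul1r.
rewrite /ET_rkg card_assignments mulr_suml big_mkcond /=; apply: eq_bigr => f _.
by rewrite prod_unif_key; case: (f \in _); rewrite /= ?mul0r // mul1r mulrC.
Qed.

Lemma ET_rkgE n : ET_rkg n K P = #|@increasing3 n|%:R *
  (1 - 3 * q_th K P + 3 * q_th K P ^+ 2 - q_th K P * r_th K P).
Proof.
rewrite ET_rkg_prodE; apply: (expected_triangles (A := predT)).
move=> i j k /andP [lt_ij lt_jk].
have neq_ik := ltn_ord_neq (ltn_trans lt_ij lt_jk).
have [neq_ij neq_jk] := (ltn_ord_neq lt_ij, ltn_ord_neq lt_jk).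
rewrite -sum_unif_key_triangle -(sum_ffun_prod_marginal3 (fun _ => sum_unif_key) neq_ij neq_jk neq_ik
  (fun A B C => (~~ [disjoint A & B] && ~~ [disjoint B & C] && ~~ [disjoint A & C])%:R)).
by apply: eq_bigr => f _; rewrite /rkg_adj neq_ij neq_jk neq_ik.
Qed.
End RandomKeyGraph.

Lemma ltn_binB_binD m K : (0 < K)%N -> (K <= m)%N ->
  ('C(m - K, K) * 'C(m + K, K) < 'C(m, K) * 'C(m, K))%N.
Proof.
move=> K_gt0 leKm.
have ffact_lt : ((m - K) ^_ K * (m + K) ^_ K < m ^_ K * m ^_ K)%N.
  rewrite !ffact_prod -!big_split /= -(ltr_nat rat) !natr_prod.
  apply: ltr_prod => [|t _]; first by apply/hasP; exists (Ordinal K_gt0); rewrite ?mem_index_enum.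
  rewrite ler0n ltr_nat /=; have lt_tK := ltn_ord t.
  have -> : (m - K - t = (m - t) - K)%N by lia.
  have -> : (m + K - t = (m - t) + K)%N by lia.
  by rewrite -subn_sqr ltn_subrL !expn_gt0 K_gt0 subn_gt0 (leq_trans lt_tK leKm).
rewrite -!bin_ffact mulnACA [in X in (_ < X)%N]mulnACA in ffact_lt.
by rewrite ltn_pmul2r ?muln_gt0 ?fact_gt0 in ffact_lt.
Qed.

Section KeyPoolParameters.
Variables K P : nat.
Hypotheses (K_gt0 : (0 < K)%N) (leKP : (K <= P)%N).

Lemma q_th_gt0 : (2 * K <= P)%N -> 0 < q_th K P.
Proof. by move=> le2KP; rewrite q_thE; apply: divr_gt0; rewrite ltr0n bin_gt0; lia. Qed.

Lemma r_th_lt_sqr_q_th : (2 * K <= P)%N -> r_th K P < q_th K P ^+ 2.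
Proof.
move=> le2KP; rewrite q_thE r_thE expr2 mulf_div ltr_pdivrMr ?ltr0n ?bin_gt0 //.
rewrite mulrAC ltr_pdivlMr ?mulr_gt0 ?ltr0n ?bin_gt0 // -!natrM ltr_nat.
have leK_PK : (K <= P - K)%N by lia.
have := ltn_binB_binD K_gt0 leK_PK.
rewrite subnK // (_ : P - K - K = P - 2 * K)%N; last by lia.
by rewrite mulnA ltn_pmul2r ?bin_gt0.
Qed.
End KeyPoolParameters.

Theorem mainTheorem16 (K P n : nat) :
  (0 < K)%N -> (K <= P)%N -> 0 < p_th K P -> (3 <= n)%N ->
  let ratio := ET_rkg n K P / ET_er n (p_th K P) in
  let q := q_th K P in
  let r := r_th K P in
  [/\ ratio = CK K P / p_th K P,
      CK K P / p_th K P = 1 + (q ^+ 2 - r) / (1 - q) ^+ 3 * q,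
      1 <= ratio,
      (ratio = 1 <-> (P < 2 * K)%N) &
      ((2 * K <= P)%N -> (P < 3 * K)%N -> ratio = 1 + (q / (1 - q)) ^+ 3)].
Proof.
move=> K_gt0 leKP p_gt0 n_ge3 ratio q r.
have gt0_1subq : 0 < 1 - q := p_gt0.
have ntriples_neq0 : #|@increasing3 n|%:R != 0 :> rat.
  by rewrite pnatr_eq0 -lt0n increasing3_gt0.
have ratioE : ratio = 1 + (q ^+ 2 - r) / (1 - q) ^+ 3 * q.
  rewrite /ratio ET_rkgE // ET_erE /p_th -/q -/r.
  by field; rewrite ntriples_neq0 gt_eqF.
have CKE : CK K P / p_th K P = 1 + (q ^+ 2 - r) / (1 - q) ^+ 3 * q.
  by rewrite /CK /beta_th /p_th -/q -/r; field; rewrite gt_eqF.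
have excess_gt0 : (2 * K <= P)%N -> 0 < (q ^+ 2 - r) / (1 - q) ^+ 3 * q.
  move=> le2KP; rewrite mulr_gt0 ?q_th_gt0 // divr_gt0 ?exprn_gt0 //.
  by rewrite subr_gt0 r_th_lt_sqr_q_th.
have [ltP2K | le2KP] := ltnP P (2 * K).
  have excess0 : (q ^+ 2 - r) / (1 - q) ^+ 3 * q = 0 by rewrite /q q_th_small ?mulr0.
  by split; rewrite ?ratioE ?CKE ?excess0 ?addr0 //; lia.
split; rewrite ?ratioE ?CKE //.
- by rewrite lerDl ltW ?excess_gt0.
- split=> [|ltP2K]; last by lia.
  rewrite -[RHS]addr0 => /addrI excess0.
  by have := excess_gt0 le2KP; rewrite excess0 ltxx.
- by move=> _ ltP3K; rewrite /r r_th_small //; field; rewrite gt_eqF.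
Qed.
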